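(* Let $G=(V,E)$ be a graph with $|V|=n$, let $k\ge1$, and suppose $N_1,\dots,N_r$ is an $r$-partition of $G$. Then $$M^G_{k,n}\le \sum_{i=1}^r M^C_{k,|N_i|}+r .$$ In particular, $M^G_{k,n}=O(rk\log(n/k))+r$.
   Context: Let $G=(V,E)$ be a simple undirected graph. A set $S\subseteq V$ is a hub for $U\subseteq V$ if the induced subgraph $G_S$ is connected and every $u\in U$ has a neighbor $s\in S$, i.e. $\{u,s\}\in E$. Pairwise disjoint sets $N_1,\dots,N_r\subseteq V$ form an $r$-partition of $G$ if $\bigcup_{i=1}^r N_i=V$ and, for every $i$, $V\setminus N_i$ is a hub for $N_i$. A measurement matrix for $G$ is a $0$-$1$ matrix with columns indexed by $V$ in which every nonzero row has a support that induces a connected subgraph of $G$. A vector is $k$-sparse if it has at most $k$ nonzero entries. $A$ identifies all $k$-sparse vectors if $Ax_1\ne Ax_2$ for every two distinct $k$-sparse $x_1,x_2\in\mathbb{R}^n$. $M^G_{k,n}$ is the minimum number of rows of a measurement matrix for $G$ that identifies all $k$-sparse vectors. $M^C_{k,N}$ is the minimum number of rows of an arbitrary $0$-$1$ matrix with $N$ columns that identifies all $k$-sparse vectors in $\mathbb{R}^N$; it satisfies $M^C_{k,N}=O(k\log(N/k))$. *)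

From HB Require Import structures.
From mathcomp Require Import all_boot all_order all_algebra.
Set Implicit Arguments. Unset Strict Implicit. Unset Printing Implicit Defensive.
Import Order.TTheory GRing.Theory Num.Theory.
From Stdlib Require Import ClassicalEpsilon.

Definition asb (P : Prop) : bool :=
  if excluded_middle_informative P then true else false.

Lemma asbP (P : Prop) : reflect P (asb P).
Proof. by rewrite /asb; case: excluded_middle_informative => h; constructor. Qed.

Section Defs.
Variable V : finType.
Variable e : rel V. (* adjacency of a simple undirected graph *)

Definition induced (S : {set V}) : rel V :=
  [rel a b | [&& e a b, a \in S & b \in S]].

Definition connected_set (S : {set V}) : Prop :=
  forall x y, x \in S -> y \in S -> connect (induced S) x y.

Definition hub (S U : {set V}) : Prop :=
  connected_set S /\ forall u, u \in U -> exists2 s, s \in S & e u s.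

Definition r_partition (r : nat) (N : 'I_r -> {set V}) : Prop :=
  [/\ forall i j, i != j -> [disjoint N i & N j],
      \bigcup_(i < r) N i = [set: V] &
      forall i, hub (~: N i) (N i)].
End Defs.

Section Sensing.
Variable R : realFieldType.

(* A 0-1 matrix with m rows and columns indexed by T is given by its
   boolean entries A i t (entry = 1 iff A i t). *)
Definition mx01 (m : nat) (T : finType) := 'I_m -> T -> bool.

Definition mx01_mul (m : nat) (T : finType) (A : mx01 m T) (x : {ffun T -> R})
  : {ffun 'I_m -> R} := [ffun i => (\sum_(t | A i t) x t)%R].

Definition sparse (T : finType) (k : nat) (x : {ffun T -> R}) : bool :=
  #|[set t | x t != 0%R]| <= k.

Definition identifies (m : nat) (T : finType) (A : mx01 m T) (k : nat) : Prop :=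
  forall x1 x2 : {ffun T -> R}, sparse k x1 -> sparse k x2 ->
    x1 != x2 -> mx01_mul A x1 != mx01_mul A x2.

Definition measurement (V : finType) (e : rel V) (m : nat) (A : mx01 m V) : Prop :=
  forall i, [set v | A i v] != set0 -> connected_set e [set v | A i v].

Lemma MC_ex (k N : nat) :
  exists m, exists A : mx01 m 'I_N, identifies A k.
Proof.
exists N, (fun i j => j == i) => x1 x2 _ _ ne; apply: contra ne => /eqP E.
apply/eqP/ffunP => i; move/ffunP: E => /(_ i); rewrite !ffunE.
by rewrite !(big_pred1_eq _ i).
Qed.

Lemma MG_ex (V : finType) (e : rel V) (k : nat) :
  exists m, exists A : mx01 m V, measurement e A /\ identifies A k.
Proof.
exists #|V|, (fun i v => v == enum_val i); split.
  move=> i _ x y; rewrite !inE => /eqP -> /eqP ->; exact: connect0.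
move=> x1 x2 _ _ ne; apply: contra ne => /eqP E.
apply/eqP/ffunP => v; move/ffunP: E => /(_ (enum_rank v)); rewrite !ffunE.
by rewrite !(big_pred1_eq _ (enum_val (enum_rank v))) enum_rankK.
Qed.

Definition MC (k N : nat) : nat :=
  ex_minn (P := fun m => asb (exists A : mx01 m 'I_N, identifies A k))
    (let: ex_intro m h := MC_ex k N in ex_intro _ m (introT (asbP _) h)).

Definition MG (V : finType) (e : rel V) (k : nat) : nat :=
  ex_minn (P := fun m => asb (exists A : mx01 m V, measurement e A /\ identifies A k))
    (let: ex_intro m h := MG_ex e k in ex_intro _ m (introT (asbP _) h)).
End Sensing.

From HB Require Import structures.
From mathcomp Require Import all_boot all_order all_algebra.
From Stdlib Require Import ClassicalEpsilon.
Set Implicit Arguments. Unset Strict Implicit. Unset Printing Implicit Defensive.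
Import Order.TTheory GRing.Theory Num.Theory.

(* For each block N_i fix an optimal identifying 0-1 matrix A_i with
   M^C_{k,|N_i|} rows, indexed by an enumeration 'I_#|N_i| of N_i.  Each row
   of A_i, with support s inside N_i, is lifted to the test set
   (V \ N_i) ∪ s, and we add the extra test set V \ N_i itself.  All these
   sets contain the hub V \ N_i of N_i, hence induce connected subgraphs.
   Subtracting the measurement on V \ N_i from a lifted measurement recovers
   the original measurement of A_i on the restriction of x to N_i; since that
   restriction is still k-sparse, A_i determines it.  As the blocks cover V,
   the restrictions determine x.  Counting the test sets gives
   \sum_i (M^C_{k,|N_i|} + 1) rows. *)

Section MeasurementBound.
Variables (R : realFieldType) (V : finType) (e : rel V) (k : nat).

Lemma MG_le_family (T : finType) (F : T -> {set V}) :
  (forall t, connected_set e (F t)) ->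
  (forall x1 x2 : {ffun V -> R}, sparse k x1 -> sparse k x2 ->
     (forall t, \sum_(v in F t) x1 v = \sum_(v in F t) x2 v)%R -> x1 = x2) ->
  MG R e k <= #|T|.
Proof.
move=> F_conn F_sep; rewrite /MG; case: ex_minnP => m _ m_min; apply: m_min.
apply/asbP; exists (fun i v => v \in F (enum_val i)); split.
  move=> i _; have -> : [set v | v \in F (enum_val i)] = F (enum_val i).
    by apply/setP => v; rewrite inE.
  exact: F_conn.
move=> x1 x2 s1 s2; apply: contra_neqN => /eqP/ffunP eq_meas.
by apply: F_sep => // t; have := eq_meas (enum_rank t); rewrite !ffunE enum_rankK.
Qed.

End MeasurementBound.

(* Every set containing a hub for its complement induces a connected subgraph:
   each of its vertices is in the hub or adjacent to it. *)
Lemma connected_hub_superset (V : finType) (e : rel V) (e_sym : symmetric e)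
  (N S : {set V}) : hub e (~: N) N -> ~: N \subset S -> connected_set e S.
Proof.
move=> [hub_conn hub_adj] subS.
have S_sym : connect_sym (induced e S).
  apply: sym_connect_sym => a b; rewrite /induced /= e_sym.
  by case: (e b a) => //=; rewrite andbC.
have to_hub u : u \in S -> exists2 s, s \in ~: N & connect (induced e S) u s.
  move=> uS; case: (boolP (u \in N)) => uN; last by exists u; rewrite ?inE.
  case: (hub_adj u uN) => s sC eus; exists s => //; apply: connect1.
  by rewrite /induced /= eus uS (subsetP subS s sC).
have hub_in_S a b : induced e (~: N) a b -> induced e S a b.
  move=> /and3P[eab aC bC].
  by rewrite /induced /= eab (subsetP subS a aC) (subsetP subS b bC).
move=> x y xS yS; case: (to_hub x xS) => sx sxC x_sx; case: (to_hub y yS) => sy syC y_sy.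
apply: connect_trans x_sx _; rewrite S_sym; apply: connect_trans y_sy _; rewrite S_sym.
apply: connect_sub (hub_conn sx sy sxC syC) => a b ab; exact/connect1/hub_in_S.
Qed.

Lemma MC_spec (R : realFieldType) (k n : nat) :
  exists A : mx01 (MC R k n) 'I_n, identifies R A k.
Proof. by rewrite /MC; case: ex_minnP => m /asbP. Qed.

Definition MC_matrix (R : realFieldType) (k n : nat) : mx01 (MC R k n) 'I_n :=
  proj1_sig (constructive_indefinite_description _ (@MC_spec R k n)).
Arguments MC_matrix : clear implicits.

Lemma MC_matrix_identifies (R : realFieldType) (k n : nat) :
  identifies R (MC_matrix R k n) k.
Proof. exact: proj2_sig (constructive_indefinite_description _ (@MC_spec R k n)). Qed.

Section Lifting.
Variables (R : realFieldType) (V : finType) (N : {set V}).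

Definition restrict (x : {ffun V -> R}) : {ffun 'I_#|N| -> R} :=
  [ffun s => x (enum_val s)].

Lemma restrict_sparse (k : nat) (x : {ffun V -> R}) :
  sparse k x -> sparse k (restrict x).
Proof.
apply: leq_trans; rewrite -(card_imset _ enum_val_inj); apply: subset_leq_card.
by apply/subsetP => v /imsetP[s]; rewrite !inE ffunE => nz ->.
Qed.

Definition lifted_row (m : nat) (A : mx01 m 'I_#|N|) (j : 'I_m) : {set V} :=
  ~: N :|: [set enum_val s | s in [set s | A j s]].

Lemma sum_lifted_row (m : nat) (A : mx01 m 'I_#|N|) (j : 'I_m) (x : {ffun V -> R}) :
  (\sum_(v in lifted_row A j) x v =
   \sum_(v in ~: N) x v + mx01_mul A (restrict x) j)%R.
Proof.
rewrite (eq_bigl [predU ~: N & [set enum_val s | s in [set s | A j s]]]) => [|v]; last by rewrite !inE.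
rewrite bigU /=; last first.
  rewrite disjoint_sym disjoints_subset setCK.
  by apply/subsetP => _ /imsetP[s _ ->]; exact: enum_valP.
rewrite big_imset /=; last by move=> a b _ _; exact: enum_val_inj.
by rewrite ffunE; congr (_ + _)%R; apply: eq_big => s; rewrite ?inE ?ffunE.
Qed.

Lemma lifted_rows_determine (m k : nat) (A : mx01 m 'I_#|N|) (x1 x2 : {ffun V -> R}) :
  identifies R A k -> sparse k x1 -> sparse k x2 ->
  (\sum_(v in ~: N) x1 v = \sum_(v in ~: N) x2 v)%R ->
  (forall j, \sum_(v in lifted_row A j) x1 v = \sum_(v in lifted_row A j) x2 v)%R ->
  restrict x1 = restrict x2.
Proof.
move=> A_id s1 s2 eq_out eq_lift; apply/eqP; apply: contraT => ne.
have /negP[] := A_id _ _ (restrict_sparse s1) (restrict_sparse s2) ne.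
apply/eqP/ffunP => j; have := eq_lift j; rewrite !sum_lifted_row eq_out.
exact: addrI.
Qed.

End Lifting.

Lemma restricts_determine (R : realFieldType) (V : finType) (r : nat)
  (N : 'I_r -> {set V}) (x1 x2 : {ffun V -> R}) :
  \bigcup_(i < r) N i = [set: V] ->
  (forall i, restrict (N i) x1 = restrict (N i) x2) -> x1 = x2.
Proof.
move=> cover eq_restr; apply/ffunP => v.
have : v \in \bigcup_(i < r) N i by rewrite cover inE.
case/bigcupP => i _ vN.
by move/ffunP: (eq_restr i) => /(_ (enum_rank_in vN v)); rewrite !ffunE enum_rankK_in.
Qed.

(* One test set per row of each block matrix, plus one per block. *)
Lemma card_tagged_option (r : nat) (m : 'I_r -> nat) :
  #|{: {i : 'I_r & option 'I_(m i)}}| = \sum_(i < r) m i + r.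
Proof.
rewrite card_tagged sumnE big_map big_enum /=.
rewrite (eq_bigr (fun i => m i + 1)) => [|i _]; last by rewrite card_option card_ord addn1.
by rewrite big_split /= sum1_card card_ord.
Qed.

Theorem theorem7 (R : realFieldType) (V : finType) (e : rel V)
    (e_sym : symmetric e) (e_irr : irreflexive e)
    (k r : nat) (N : 'I_r -> {set V})
    (hk : 0 < k) (hN : r_partition e N) :
  MG R e k <= \sum_(i < r) MC R k #|N i| + r.
Proof.
move: hN => [_ cover hubs].
pose A i := MC_matrix R k #|N i|.
pose F (t : {i : 'I_r & option 'I_(MC R k #|N i|)}) : {set V} :=
  match t with
  | existT i None => ~: N i
  | existT i (Some j) => lifted_row (A i) j
  end.
rewrite -card_tagged_option; apply: MG_le_family (F) _ _.
  case=> i [j|] /=; apply: (connected_hub_superset e_sym (hubs i)) => //.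
  exact: subsetUl.
move=> x1 x2 s1 s2 eq_meas; apply: restricts_determine cover _ => i.
apply: lifted_rows_determine (@MC_matrix_identifies R k #|N i|) s1 s2 _ _.
  exact: (eq_meas (existT _ i None)).
by move=> j; exact: (eq_meas (existT _ i (Some j))).
Qed.
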